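(* Let $N=\begin{pmatrix}0&1&0\\0&0&1\\0&0&0\end{pmatrix}$, $\xi=(x,y,z)^T$, and $d\ge1$. Then the set $W_d=\{\hat e_3\,p(x,y):p\in P^2_d\}$, $\hat e_3=(0,0,1)^T$, is a complement in $V^3_d$ to $\mathrm{rng}(\mathrm{ad}_N)\cap V^3_d$, i.e. $V^3_d=(\mathrm{rng}(\mathrm{ad}_N)\cap V^3_d)\oplus W_d$, where $\mathrm{rng}(\mathrm{ad}_N)$ is the image of $\mathrm{ad}_N$ on $F^3_d$.
   Context: $P^2_d$ is the space of real homogeneous polynomials of degree $d$ in $(x,y)$. $F^3_d$ is the space of vector fields on $\mathbb{R}^3$ with components real homogeneous polynomials of degree $d$ in $(x,y,z)$, and $V^3_d=\{v\in F^3_d:\nabla\cdot v=0\}$. $\mathrm{ad}_N h(\xi)=Dh(\xi)N\xi-Nh(\xi)$. *)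

From HB Require Import structures.
From mathcomp Require Import all_boot all_order all_algebra.
From mathcomp Require Import mpoly.
Set Implicit Arguments. Unset Strict Implicit. Unset Printing Implicit Defensive.
Import Order.TTheory GRing.Theory Num.Theory.
Local Open Scope ring_scope.

(* Coordinates xi = (x, y, z) of R^3 are the variables 'X_0, 'X_1, 'X_2
   of {mpoly R[3]}. *)
Definition i0 : 'I_3 := @Ordinal 3 0 isT.
Definition i1 : 'I_3 := @Ordinal 3 1 isT.
Definition i2 : 'I_3 := @Ordinal 3 2 isT.

Definition vfield (R : ringType) := 'I_3 -> {mpoly R[3]}.

Definition xi (R : ringType) : vfield R := fun i => 'X_i.

Definition Nmat (R : ringType) : 'M[R]_3 :=
  \matrix_(i < 3, j < 3) (if (j : nat) == (i : nat).+1 then 1 else 0).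

Definition mxvf (R : ringType) (A : 'M[R]_3) (v : vfield R) : vfield R :=
  fun i => \sum_(j < 3) A i j *: v j.

Definition jac_apply (R : ringType) (h u : vfield R) : vfield R :=
  fun i => \sum_(j < 3) (h i)^`M(j) * u j.

Definition adN (R : ringType) (h : vfield R) : vfield R :=
  fun i => jac_apply h (mxvf (Nmat R) (xi R)) i - mxvf (Nmat R) h i.

Definition F3 (R : ringType) (d : nat) (v : vfield R) : Prop :=
  forall i, v i \is d.-homog.

Definition divergence (R : ringType) (v : vfield R) : {mpoly R[3]} :=
  \sum_(i < 3) (v i)^`M(i).

Definition V3 (R : ringType) (d : nat) (v : vfield R) : Prop :=
  F3 d v /\ divergence v = 0.

Definition rng_adN (R : ringType) (d : nat) (v : vfield R) : Prop :=
  exists2 h : vfield R, F3 d h & forall i, v i = adN h i.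

(* W_d = { e3 p(x,y) : p in P^2_d } ; P^2_d = homogeneous polys of degree d
   in two variables (x,y), embedded in R[x,y,z] by substitution. *)
Definition embed_xy (R : ringType) (p : {mpoly R[2]}) : {mpoly R[3]} :=
  p \mPo [tuple ('X_i0 : {mpoly R[3]}); 'X_i1].

Definition Wd (R : ringType) (d : nat) (v : vfield R) : Prop :=
  exists2 p : {mpoly R[2]}, p \is d.-homog &
    forall i, v i = if i == i2 then embed_xy p else 0.

Definition direct_sum_decomp (R : ringType) (V A B : vfield R -> Prop) : Prop :=
  [/\ (forall a, A a -> V a), (forall b, B b -> V b),
      (forall v, V v -> exists a, exists b, [/\ A a, B b & forall i, v i = a i + b i])
    & (forall v, A v -> B v -> forall i, v i = 0)].

(* In coordinates, ad_N h = (D h_x - h_y, D h_y - h_z, D h_z) with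
   D = y d/dx + z d/dy.  For the Fischer product <f, g> = sum_m f_m g_m m!,
   multiplication by x_i is adjoint to d/dx_i, so D has adjoint
   D* = x d/dy + y d/dz, and D* is a nilpotent derivation.

   Intersection: if ad_N h = e3 q with q free of z, then q = D^2 h_y is
   orthogonal to ker D*^2; for every z-free monomial x^a y^b the polynomial
   x^a y^(b mod 2) (y^2 - 2xz)^(b/2) lies in ker D*^2 and isolates the
   coefficient of x^a y^b in q, so q = 0.

   Sum: by finite-dimensional duality it is enough that every G orthogonal to
   rng(ad_N) and to W_d is orthogonal to V_d.  Such a G satisfies
   D* G_x = 0, D* G_y = G_x, D* G_z = G_y, and G_z = z g.  Expanding
   D*^k (z g) and using the nilpotency of D* gives D* g = 0, hence G = xi g,
   and <v, xi g> = <div v, g> = 0. *)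

From HB Require Import structures.
From mathcomp Require Import all_boot all_order all_algebra.
From mathcomp Require Import mpoly.
From mathcomp Require Import ring zify.
Set Implicit Arguments. Unset Strict Implicit. Unset Printing Implicit Defensive.
Import Order.TTheory GRing.Theory Num.Theory.
Local Open Scope ring_scope.

Lemma big_ord3 (T : Type) (idx : T) (op : Monoid.law idx) (F : 'I_3 -> T) :
  \big[op/idx]_(i < 3) F i = op (op (F i0) (F i1)) (F i2).
Proof.
rewrite !big_ord_recl big_ord0 Monoid.mulm1 Monoid.mulmA.
by congr (op (op (F _) (F _)) (F _)); apply: val_inj.
Qed.

Lemma ord3P (i : 'I_3) : [\/ i = i0, i = i1 | i = i2].
Proof.
by case: i => -[|[|[|//]]] ?; [constructor 1|constructor 2|constructor 3]; apply: val_inj.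
Qed.

Section MpolyFacts.
Variables (R : comNzRingType) (n : nat).
Implicit Types (f g : {mpoly R[n]}) (m : 'X_{1..n}).

Lemma submUK m (i : 'I_n) : (0 < m i)%N -> (m - U_(i) + U_(i))%MM = m.
Proof.
move=> mi; apply/mnmP => j; rewrite mnmDE mnmBE mnm1E.
by case: eqP => [<-|_]; rewrite ?subn0 ?addn0 // subnK.
Qed.

Lemma mderivXU (i j : 'I_n) : ('X_i : {mpoly R[n]})^`M(j) = (i == j)%:R.
Proof.
rewrite mderivX mnm1E; case: eqP => [->|_]; last by rewrite scale0r.
rewrite (_ : U_(j) - U_(j) = 0)%MM ?mpolyX0 ?scale1r //.
by apply/mnmP => k; rewrite mnmBE subnn mnm0E.
Qed.

Lemma Xi_neq0 (i : 'I_n) : ('X_i : {mpoly R[n]}) != 0.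
Proof.
by apply: contra_neq (oner_neq0 R) => Xi0; move: (@mcoeffXU n R i i); rewrite Xi0 mcoeff0 eqxx.
Qed.

Lemma dhomogXi d (i : 'I_n) f : f \is d.-homog -> 'X_i * f \is d.+1.-homog.
Proof. by apply: (dhomogM (d := 1)); rewrite dhomogX; apply/eqP; exact: mdeg1. Qed.

Lemma dhomogXn (i : 'I_n) k : ('X_i : {mpoly R[n]}) ^+ k \is k.-homog.
Proof.
have X1 : ('X_i : {mpoly R[n]}) \is 1.-homog by rewrite dhomogX; apply/eqP; exact: mdeg1.
by rewrite -[X in X.-homog]mul1n dhomogMn.
Qed.

Lemma dhomog_mderiv d (i : 'I_n) f : f \is d.+1.-homog -> f^`M(i) \is d.-homog.
Proof.
move=> /dhomogP hf; rewrite (mpolyE f) raddf_sum /= big_seq rpred_sum // => m fm.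
rewrite mderivZ mderivX scalerA.
have [->|mi] := posnP (m i); first by rewrite mulr0 scale0r rpred0.
rewrite rpredZ // dhomogX; apply/eqP.
have := mdegD (m - U_(i))%MM U_(i).
by rewrite submUK // (hf m fm) mdeg1 addn1 => -[].
Qed.

Lemma msize_dhomog d f : f \is d.-homog -> (msize f <= d.+1)%N.
Proof. by move=> /dhomogP hf; rewrite msizeE; apply/bigmax_leqP_seq => m /hf ->. Qed.

Lemma factor_Xi (i : 'I_n) f :
  (forall m, m i = 0%N -> f@_m = 0) -> exists g, f = 'X_i * g.
Proof.
move=> f0; exists (\sum_(m <- msupp f) f@_m *: 'X_[m - U_(i)]).
rewrite {1}(mpolyE f) mulr_sumr; apply: eq_big_seq => m fm.
have mi : (0 < m i)%N.
  by rewrite lt0n; apply: contraTneq fm => /f0 f0m; rewrite mcoeff_msupp f0m eqxx.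
by rewrite -scalerAr -mpolyXD addmC submUK.
Qed.

End MpolyFacts.

Arguments dhomogXn {R n}.

Section Fischer.
Variables (R : comNzRingType) (n K : nat).
Implicit Types (f g : {mpoly R[n]}) (m : 'X_{1..n}).

Definition mfact m : nat := \prod_(i < n) (m i)`!.

Lemma mfact_gt0 m : (0 < mfact m)%N.
Proof. by rewrite prodn_gt0 // => i; exact: fact_gt0. Qed.

Lemma mfactDU m (i : 'I_n) : mfact (m + U_(i)) = ((m i).+1 * mfact m)%N.
Proof.
rewrite /mfact (bigD1 i) //= [in RHS](bigD1 i) //= mnmDE mnm1E eqxx addn1 factS mulnA.
by congr (_ * _)%N; apply: eq_bigr => j ji; rewrite mnmDE mnm1E eq_sym (negbTE ji) addn0.
Qed.

(* The Fischer inner product, truncated at degree K so that the sum is finite;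
   the truncation is invisible on polynomials of size at most K. *)
Definition fischer f g : R :=
  \sum_(m : 'X_{1..n < K}) f@_m * g@_m * (mfact m)%:R.

Lemma fischerC f g : fischer f g = fischer g f.
Proof. by apply: eq_bigr => m _; rewrite (mulrC f@_m). Qed.

Lemma fischer_is_linear f : scalar (fischer f).
Proof.
move=> c g h; rewrite /fischer mulr_sumr -big_split /=; apply: eq_bigr => m _.
by rewrite mcoeffD mcoeffZ; ring.
Qed.

HB.instance Definition _ f :=
  GRing.isLinear.Build R {mpoly R[n]} R *%R (fischer f) (fischer_is_linear f).

Lemma fischer0l g : fischer 0 g = 0.
Proof. by rewrite fischerC raddf0. Qed.

Lemma fischerBl f1 f2 g : fischer (f1 - f2) g = fischer f1 g - fischer f2 g.
Proof. by rewrite !(fischerC _ g) raddfB. Qed.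

Lemma fischer_suml (J : Type) (r : seq J) (P : pred J) (F : J -> {mpoly R[n]}) g :
  fischer (\sum_(j <- r | P j) F j) g = \sum_(j <- r | P j) fischer (F j) g.
Proof. by rewrite fischerC raddf_sum; apply: eq_bigr => j _; rewrite fischerC. Qed.

Lemma fischerXr f k :
  fischer f 'X_[k] = if (mdeg k < K)%N then f@_k * (mfact k)%:R else 0.
Proof.
rewrite /fischer; case: ifP => kK.
  rewrite (bigD1 (BMultinom kK)) //= mcoeffX eqxx mulr1 big1 ?addr0 // => m mk.
  rewrite mcoeffX; case: eqP => [km|]; last by rewrite mulr0 mul0r.
  by move: mk; rewrite -(inj_eq val_inj) /= km eqxx.
rewrite big1 // => m _; rewrite mcoeffX; case: eqP => [km|]; last by rewrite mulr0 mul0r.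
by move: (bmdeg m); rewrite -km kK.
Qed.

Lemma fischer_mderiv (i : 'I_n) f g :
  (msize f <= K)%N -> fischer f^`M(i) g = fischer f ('X_i * g).
Proof.
move=> fK; rewrite (mpolyE g) mulr_sumr !raddf_sum /=; apply: eq_bigr => k _.
rewrite -scalerAr !linearZ /= -mpolyXD addmC !fischerXr mcoeff_deriv mdegD mdeg1 addn1 mfactDU.
congr (_ * _); case: (ltnP (mdeg k).+1 K) => kK.
  by rewrite (ltnW kK) natrM mulrA -[_ *+ _]mulr_natr.
case: ifP => // kK'; rewrite (_ : f@_(k + U_(i)) = 0) ?mul0rn ?mul0r //.
by apply: memN_msupp_eq0; apply: msize_mdeg_ge; rewrite mdegD mdeg1 addn1; lia.
Qed.

End Fischer.

Section FischerNondegenerate.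
Variables (R : numDomainType) (n K : nat).
Implicit Types (f : {mpoly R[n]}) (m : 'X_{1..n}).

Lemma fischer_dhomog_eq0 d f : (d < K)%N -> f \is d.-homog ->
  (forall m, mdeg m = d -> fischer K f 'X_[m] = 0) -> f = 0.
Proof.
move=> dK fd f0; apply/mpolyP => m; rewrite mcoeff0.
have [md|] := eqVneq (mdeg m) d; last exact: dhomog_nemf_coeff.
move/eqP: (f0 m md); rewrite fischerXr md dK mulf_eq0 pnatr_eq0.
by rewrite eqn0Ngt mfact_gt0 orbF => /eqP.
Qed.

End FischerNondegenerate.

Section FischerRepresentation.
Variables (R : numFieldType) (n K d : nat) (I : finType).
Implicit Types (k : I * 'X_{1..n < K} -> R) (w : I -> {mpoly R[n]}).

(* Riesz representative, for the Fischer product, of the functional with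
   coefficients k on families of d-homogeneous polynomials. *)
Definition fischer_rep k (i : I) : {mpoly R[n]} :=
  \sum_(m : 'X_{1..n < K} | mdeg m == d) (k (i, m) / (mfact m)%:R) *: 'X_[m].

Lemma fischer_rep_dhomog k i : fischer_rep k i \is d.-homog.
Proof. by rewrite rpred_sum // => m md; rewrite rpredZ // dhomogX. Qed.

Lemma fischer_repP k w : (forall i, w i \is d.-homog) ->
  \sum_(x : I * 'X_{1..n < K}) (w x.1)@_x.2 * k x =
  \sum_(i : I) fischer K (w i) (fischer_rep k i).
Proof.
move=> wd; pose F i (m : 'X_{1..n < K}) := (w i)@_m * k (i, m).
transitivity (\sum_(x : I * 'X_{1..n < K}) F x.1 x.2); first by apply: eq_bigr => -[].
rewrite -(pair_bigA _ F) /= {}/F.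
apply: eq_bigr => i _; rewrite raddf_sum /= (bigID (fun m : 'X_{1..n < K} => mdeg m == d)) /=.
rewrite [X in _ + X]big1 ?addr0 => [|m md]; last by rewrite (dhomog_nemf_coeff (wd i) md) mul0r.
apply: eq_bigr => m md; rewrite linearZ /= fischerXr bmdeg mulrCA divfK //.
by rewrite pnatr_eq0 eqn0Ngt mfact_gt0.
Qed.

End FischerRepresentation.

Section NilpotentDerivations.
Variable R : comNzRingType.
Implicit Types (f g : {mpoly R[3]}) (h : vfield R).

(* derN f = Df(xi) N xi, and derNT is its Fischer adjoint. *)
Definition derN f : {mpoly R[3]} := 'X_i1 * f^`M(i0) + 'X_i2 * f^`M(i1).
Definition derNT f : {mpoly R[3]} := 'X_i0 * f^`M(i1) + 'X_i1 * f^`M(i2).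

Lemma derN_is_linear : linear derN.
Proof. by move=> c f g; rewrite /derN !linearP /= !mulrDr -!scalerAr scalerDr addrACA. Qed.
HB.instance Definition _ := GRing.isLinear.Build R _ _ _ derN derN_is_linear.

Lemma derNT_is_linear : linear derNT.
Proof. by move=> c f g; rewrite /derNT !linearP /= !mulrDr -!scalerAr scalerDr addrACA. Qed.
HB.instance Definition _ := GRing.isLinear.Build R _ _ _ derNT derNT_is_linear.

Lemma Nmat_vfield h i :
  mxvf (Nmat R) h i = if i == i0 then h i1 else if i == i1 then h i2 else 0.
Proof.
rewrite /mxvf big_ord3 !mxE.
by case: (ord3P i) => ->; rewrite /= ?scale1r ?scale0r ?add0r ?addr0.
Qed.

Lemma trNmat_vfield h i :
  mxvf (Nmat R)^T h i = if i == i1 then h i0 else if i == i2 then h i1 else 0.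
Proof.
rewrite /mxvf big_ord3 !mxE.
by case: (ord3P i) => ->; rewrite /= ?scale1r ?scale0r ?add0r ?addr0.
Qed.

Lemma adNE h i : adN h i = derN (h i) - mxvf (Nmat R) h i.
Proof.
rewrite /adN /jac_apply big_ord3 !Nmat_vfield /xi /= mulr0 addr0.
by rewrite (mulrC _ 'X_i1) (mulrC _ 'X_i2).
Qed.

Lemma adN_i0 h : adN h i0 = derN (h i0) - h i1. Proof. by rewrite adNE Nmat_vfield. Qed.
Lemma adN_i1 h : adN h i1 = derN (h i1) - h i2. Proof. by rewrite adNE Nmat_vfield. Qed.
Lemma adN_i2 h : adN h i2 = derN (h i2). Proof. by rewrite adNE Nmat_vfield subr0. Qed.

Lemma adN_sum (J : Type) (r : seq J) (P : pred J) (c : J -> R) (H : J -> vfield R) i :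
  adN (fun l => \sum_(j <- r | P j) c j *: H j l) i = \sum_(j <- r | P j) c j *: adN (H j) i.
Proof.
case: (ord3P i) => ->; rewrite ?adN_i0 ?adN_i1 ?adN_i2 linear_sum /= -?sumrB;
  by apply: eq_bigr => j _; rewrite linearZ /= ?adN_i0 ?adN_i1 ?adN_i2 ?scalerBr.
Qed.

Definition adNT (G : vfield R) : vfield R := fun i => derNT (G i) - mxvf (Nmat R)^T G i.

Lemma derN_dhomog d f : f \is d.+1.-homog -> derN f \is d.+1.-homog.
Proof. by move=> fd; rewrite rpredD // dhomogXi // dhomog_mderiv. Qed.

Lemma derNT_dhomog d f : f \is d.+1.-homog -> derNT f \is d.+1.-homog.
Proof. by move=> fd; rewrite rpredD // dhomogXi // dhomog_mderiv. Qed.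

Lemma adN_dhomog d h : F3 d.+1 h -> F3 d.+1 (adN h).
Proof.
move=> hd i; case: (ord3P i) => ->;
  by rewrite ?adN_i0 ?adN_i1 ?adN_i2 ?rpredB ?derN_dhomog.
Qed.

Lemma adNT_dhomog d G : F3 d.+1 G -> F3 d.+1 (adNT G).
Proof.
move=> Gd i; rewrite /adNT rpredB ?derNT_dhomog // trNmat_vfield.
by case: ifP => _ //; case: ifP => _ //; rewrite rpred0.
Qed.

Lemma fischer_derN K f g : (msize f <= K)%N -> (msize g <= K)%N ->
  fischer K (derN f) g = fischer K f (derNT g).
Proof.
move=> fK gK; have adj i j : fischer K ('X_j * f^`M(i)) g = fischer K f ('X_i * g^`M(j)).
  by rewrite fischerC -fischer_mderiv // fischerC fischer_mderiv.
by rewrite fischerC raddfD /= !(fischerC K g) !adj -raddfD.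
Qed.

End NilpotentDerivations.

Section KernelOfDerNT.
Variable R : numDomainType.
Implicit Types (f g : {mpoly R[3]}).

Lemma derNT_mul f g : derNT (f * g) = derNT f * g + f * derNT g.
Proof. by rewrite /derNT !mderivM; ring. Qed.

Lemma derNTD f g : derNT (f + g) = derNT f + derNT g. Proof. exact: raddfD. Qed.
Lemma derNTMn f k : derNT (f *+ k) = derNT f *+ k. Proof. exact: raddfMn. Qed.

Lemma derNT_X0 : derNT 'X_i0 = 0 :> {mpoly R[3]}.
Proof. by rewrite /derNT !mderivXU /= !mulr0 addr0. Qed.
Lemma derNT_X1 : derNT 'X_i1 = 'X_i0 :> {mpoly R[3]}.
Proof. by rewrite /derNT !mderivXU /= mulr1 mulr0 addr0. Qed.
Lemma derNT_X2 : derNT 'X_i2 = 'X_i1 :> {mpoly R[3]}.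
Proof. by rewrite /derNT !mderivXU /= mulr1 mulr0 add0r. Qed.

Lemma derNT1 : derNT 1 = 0 :> {mpoly R[3]}.
Proof. by rewrite /derNT -mpolyC1 !mderivC !mulr0 addr0. Qed.

Lemma derNT_expr f k : derNT f = 0 -> derNT (f ^+ k) = 0.
Proof.
move=> f0; elim: k => [|k IHk]; first by rewrite expr0 derNT1.
by rewrite exprS derNT_mul f0 IHk mul0r mulr0 addr0.
Qed.

Definition derNTn k : {mpoly R[3]} -> {mpoly R[3]} := iter k (@derNT R).

Lemma derNTn_is_linear k : linear (derNTn k).
Proof. by elim: k => [|k IHk] c f g //=; rewrite -/(derNTn k) IHk linearP. Qed.
HB.instance Definition _ k := GRing.isLinear.Build R _ _ _ (derNTn k) (derNTn_is_linear k).

Lemma derNTnD k l f : derNTn (k + l) f = derNTn k (derNTn l f).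
Proof. exact: iterD. Qed.

(* derNT lowers the weight 2 m_z + m_y of every monomial by one. *)
Lemma derNTn_X_eq0 k (m : 'X_{1..3}) : (2 * m i2 + m i1 < k)%N -> derNTn k 'X_[m] = 0.
Proof.
elim: k m => // k IHk m mk; rewrite /derNTn iterSr -/(derNTn k) /derNT !mderivX.
rewrite -!scalerAr -!mpolyXD linearD !linearZ /=.
have [->|m1] := posnP (m i1); first rewrite scale0r add0r.
  have [->|m2] := posnP (m i2); first by rewrite scale0r.
  by rewrite IHk ?scaler0 // !(mnmDE, mnmBE, mnm1E) /=; lia.
have [->|m2] := posnP (m i2).
  by rewrite scale0r addr0 IHk ?scaler0 // !(mnmDE, mnmBE, mnm1E) /=; lia.
by rewrite !IHk ?scaler0 ?addr0 // !(mnmDE, mnmBE, mnm1E) /=; lia.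
Qed.

Lemma derNT_nilpotent f : exists k, derNTn k f = 0.
Proof.
exists (\max_(m <- msupp f) (2 * m i2 + m i1).+1)%N.
rewrite {2}(mpolyE f) linear_sum big_seq big1 // => m fm.
rewrite linearZ /= derNTn_X_eq0 ?scaler0 //.
exact: (@leq_bigmax_seq _ _ xpredT (fun m : 'X_{1..3} => (2 * m i2 + m i1).+1)%N m fm).
Qed.

Lemma derNTn_mulX2 k g : derNTn k.+2 ('X_i2 * g) =
  'X_i2 * derNTn k.+2 g + ('X_i1 * derNTn k.+1 g) *+ k.+2 +
  ('X_i0 * derNTn k g) *+ 'C(k.+2, 2).
Proof.
have derNTnS j f : derNT (derNTn j f) = derNTn j.+1 f by [].
elim: k => [|k IHk].
  rewrite /derNTn /= derNT_mul derNT_X2 linearD /= !derNT_mul derNT_X1 derNT_X2 binn.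
  ring.
rewrite (_ : derNTn k.+3 _ = derNT (derNTn k.+2 ('X_i2 * g))) // IHk [in RHS]binS bin1.
move: ('C(k.+2, 2)) => c; rewrite 2!derNTD !derNTMn !derNT_mul derNT_X2 derNT_X1 derNT_X0.
by rewrite !derNTnS mulrnDr; ring.
Qed.

(* Downward induction from the nilpotency index of derNT on g. *)
Lemma derNT_eq0_of_mulX2 g : derNTn 3 ('X_i2 * g) = 0 -> derNT g = 0.
Proof.
move=> g3; have [N gN] := derNT_nilpotent g.
have step j : (0 < j)%N -> derNTn j.+2 g = 0 -> derNTn j.+1 g = 0 -> derNTn j g = 0.
  move=> j0 gj2 gj1; have : derNTn j.+2 ('X_i2 * g) = 0.
    by rewrite (_ : j.+2 = j.-1 + 3)%N ?derNTnD ?g3 ?raddf0 //; lia.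
  rewrite derNTn_mulX2 gj2 gj1 !mulr0 mul0rn !add0r -mulr_natl => /eqP.
  rewrite !mulf_eq0 -mpolyC_nat mpolyC_eq0 pnatr_eq0 eqn0Ngt bin_gt0 /=.
  by rewrite (negbTE (Xi_neq0 _ _)) => /eqP.
suff gj t j : (0 < j)%N -> (N <= j + t)%N -> derNTn j g = 0 by apply: (gj N 1%N).
elim: t j => [|t IHt] j j0 jt.
  by rewrite addn0 in jt; rewrite -(subnK jt) derNTnD gN raddf0.
by apply: step => //; apply: IHt; lia.
Qed.

Lemma adNT_kernel (G : vfield R) g : (forall i, adNT G i = 0) -> G i2 = 'X_i2 * g ->
  forall i, G i = 'X_i * g.
Proof.
move=> GT0 G2; have Gi i : derNT (G i) = mxvf (Nmat R)^T G i.
  by apply/eqP; rewrite -subr_eq0; apply/eqP/GT0.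
move: (Gi i0) (Gi i1) (Gi i2); rewrite !trNmat_vfield /= => G0 G1 G2'.
have g0 : derNT g = 0.
  by apply: derNT_eq0_of_mulX2; rewrite /derNTn /= -G2 G2' G1 G0.
have G1E : G i1 = 'X_i1 * g by rewrite -G2' G2 derNT_mul derNT_X2 g0 mulr0 addr0.
have G0E : G i0 = 'X_i0 * g by rewrite -G1 G1E derNT_mul derNT_X1 g0 mulr0 addr0.
by move=> i; case: (ord3P i) => ->.
Qed.

End KernelOfDerNT.

Section RangeOfDerN.
Variable R : numDomainType.

Lemma mdeg3 (m : 'X_{1..3}) : mdeg m = (m i0 + m i1 + m i2)%N.
Proof. by rewrite mdegE big_ord3. Qed.

Lemma mpolyX3 (m : 'X_{1..3}) :
  'X_[m] = 'X_i0 ^+ m i0 * 'X_i1 ^+ m i1 * 'X_i2 ^+ m i2 :> {mpoly R[3]}.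
Proof. by rewrite mpolyXE_id big_ord3. Qed.

(* The witness is x^a y^(b mod 2) (y^2 - 2xz)^(b/2): y^2 - 2xz is killed by
   derNT and agrees with y^2 modulo z. *)
Lemma derNT2_dual_monomial (m : 'X_{1..3}) : m i2 = 0%N ->
  exists g r : {mpoly R[3]},
    [/\ g \is (mdeg m).-homog, derNT (derNT g) = 0 & g = 'X_[m] + 'X_i2 * r].
Proof.
move=> m2; set a := m i0; set b := m i1.
pose u : {mpoly R[3]} := 'X_i1 ^+ 2 - ('X_i0 * 'X_i2) *+ 2.
have u0 : derNT u = 0.
  by rewrite /u raddfB /= derNTMn expr2 !derNT_mul derNT_X0 derNT_X1 derNT_X2; ring.
pose S := \sum_(i < b./2) u ^+ (b./2.-1 - i) * ('X_i1 ^+ 2) ^+ i.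
exists ('X_i0 ^+ a * 'X_i1 ^+ odd b * u ^+ b./2),
  ('X_i0 ^+ a * 'X_i1 ^+ odd b * (- ('X_i0 *+ 2) * S)); split.
- have u2 : u \is 2.-homog.
    by rewrite rpredB ?rpredMn ?dhomogXn // (dhomogXi _ (dhomogXn _ 1)).
  have := dhomogM (dhomogM (dhomogXn i0 a) (dhomogXn i1 (odd b))) (dhomogMn b./2 u2).
  by rewrite -addnA mul2n odd_double_half mdeg3 m2 addn0.
- do 2!rewrite !derNT_mul (derNT_expr _ u0) (derNT_expr _ (derNT_X0 R))
       !(mul0r, mulr0, add0r, addr0).
  by case: (odd b); rewrite /= ?expr1 ?expr0 ?derNT_X1 ?derNT1 ?derNT_X0 ?raddf0 ?(mulr0, mul0r).
have ub : u ^+ b./2 = ('X_i1 ^+ 2) ^+ b./2 + (u - 'X_i1 ^+ 2) * S.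
  by rewrite -subrXX addrC subrK.
have yb : 'X_i1 ^+ b = 'X_i1 ^+ odd b * ('X_i1 ^+ 2) ^+ b./2 :> {mpoly R[3]}.
  by rewrite -exprM -exprD mul2n odd_double_half.
by rewrite (mpolyX3 m) m2 expr0 mulr1 ub yb /u; ring.
Qed.

Lemma derN2_zfree_eq0 d (h q : {mpoly R[3]}) :
  h \is d.+1.-homog -> q^`M(i2) = 0 -> derN (derN h) = q -> q = 0.
Proof.
move=> hd qz hq; have qd : q \is d.+1.-homog by rewrite -hq !derN_dhomog.
apply/mpolyP => m; rewrite mcoeff0.
have [md|] := eqVneq (mdeg m) d.+1; last exact: dhomog_nemf_coeff.
have [m2|m2] := posnP (m i2); last first.
  move/eqP: (mcoeff_deriv i2 (m - U_(i2)) q); rewrite qz mcoeff0 submUK //.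
  by rewrite eq_sym mulrn_eq0 /= => /eqP.
have [g [r [gd g0 gE]]] := derNT2_dual_monomial m2; rewrite md in gd.
have sz := @msize_dhomog R 3 d.+1.
have /eqP : fischer d.+2 q g = 0.
  by rewrite -hq !fischer_derN ?sz ?derN_dhomog ?derNT_dhomog // g0 raddf0.
rewrite gE raddfD /= -fischer_mderiv ?sz // qz (fischerC _ 0) raddf0 addr0 fischerXr md.
by rewrite ltnSn mulf_eq0 pnatr_eq0 eqn0Ngt mfact_gt0 orbF => /eqP.
Qed.

End RangeOfDerN.

Lemma span_of_orthogonal (R : fieldType) (I J : finType) (A : J -> I -> R) (v : I -> R) :
  (forall k : I -> R, (forall j, \sum_i A j i * k i = 0) -> \sum_i v i * k i = 0) ->
  exists c : J -> R, forall i, v i = \sum_j c j * A j i.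
Proof.
move=> vperp; pose M := \matrix_(r < #|{: J}|, l < #|{: I}|) A (enum_val r) (enum_val l).
have enum_sum (T : finType) (F : T -> R) :
    \sum_(l < #|{: T}|) F (enum_val l) = \sum_x F x by rewrite -(big_enum_val F).
have /submxP[c uc] : (\row_(l < #|{: I}|) v (enum_val l) <= M)%MS.
  rewrite submxE; apply/eqP/matrixP => i0 col; rewrite !mxE.
  pose k x := cokermx M (enum_rank x) col.
  have Mk j : \sum_i A j i * k i = 0.
    have := congr1 (fun B : 'M_(#|{: J}|, #|{: I}|) => B (enum_rank j) col) (mulmx_coker M).
    rewrite !mxE => Mk0; rewrite -[RHS]Mk0 -[LHS](enum_sum _ (fun i => A j i * k i)).
    apply: eq_bigr => l _.
    by rewrite /k enum_valK; congr (_ * _); rewrite mxE enum_rankK.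
  rewrite -[RHS](vperp k Mk) -[RHS](enum_sum _ (fun i => v i * k i)); apply: eq_bigr => l _.
  by rewrite /k enum_valK mxE.
exists (fun j => c 0 (enum_rank j)) => i.
move: (congr1 (fun B : 'rV_#|{: I}| => B 0 (enum_rank i)) uc); rewrite !mxE enum_rankK => ->.
rewrite -[RHS](enum_sum _ (fun j => c 0 (enum_rank j) * A j i)); apply: eq_bigr => r _.
by rewrite enum_valK mxE enum_rankK.
Qed.

Section EmbedXY.
Variable R : comNzRingType.
Implicit Types p : {mpoly R[2]}.

Lemma embed_xyX a b :
  embed_xy ('X_ord0 ^+ a * 'X_ord_max ^+ b : {mpoly R[2]}) = 'X_i0 ^+ a * 'X_i1 ^+ b.
Proof. by rewrite /embed_xy rmorphM !rmorphXn /= !comp_mpolyXU. Qed.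

Lemma embed_xyE p :
  embed_xy p = \sum_(m <- msupp p) p@_m *: ('X_i0 ^+ m ord0 * 'X_i1 ^+ m ord_max).
Proof.
rewrite {1}(mpolyE p) /embed_xy raddf_sum /=; apply: eq_bigr => m _.
rewrite comp_mpolyZ comp_mpolyX !big_ord_recr big_ord0 /=.
by rewrite (_ : widen_ord _ ord_max = ord0) ?mul1r //; apply: val_inj.
Qed.

Lemma embed_xy_dhomog d p : p \is d.-homog -> embed_xy p \is d.-homog.
Proof.
move=> /dhomogP pd; rewrite embed_xyE big_seq rpred_sum // => m pm; rewrite rpredZ //.
have := dhomogM (dhomogXn (R := R) i0 (m ord0)) (dhomogXn (R := R) i1 (m ord_max)).
have : mdeg m = d by exact: pd.
rewrite mdegE !big_ord_recl big_ord0 addn0 => <-.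
by rewrite (_ : lift ord0 ord0 = ord_max) //; apply: val_inj.
Qed.

Lemma embed_xy_mderivX2 p : (embed_xy p)^`M(i2) = 0.
Proof.
have Xn2 (i : 'I_3) k : i != i2 -> (('X_i : {mpoly R[3]}) ^+ k)^`M(i2) = 0.
  by move=> i2i; rewrite mpolyXn mderivX mulmnE mnm1E (negbTE i2i) mul0n scale0r.
rewrite embed_xyE linear_sum big1 //= => m _.
by rewrite linearZ /= mderivM !Xn2 // mul0r mulr0 addr0 scaler0.
Qed.

Definition e3_vfield p : vfield R := fun i => if i == i2 then embed_xy p else 0.

Lemma e3_vfield_dhomog d p : p \is d.-homog -> F3 d (e3_vfield p).
Proof. by move=> pd i; rewrite /e3_vfield; case: ifP; rewrite ?rpred0 ?embed_xy_dhomog. Qed.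

Lemma e3_vfield_sum (J : Type) (r : seq J) (P : pred J) (c : J -> R) (F : J -> {mpoly R[2]}) i :
  e3_vfield (\sum_(j <- r | P j) c j *: F j) i = \sum_(j <- r | P j) c j *: e3_vfield (F j) i.
Proof.
rewrite /e3_vfield; case: ifP => _; last by rewrite big1 // => j _; rewrite scaler0.
by rewrite /embed_xy raddf_sum; apply: eq_bigr => j _; exact: comp_mpolyZ.
Qed.

Lemma divergence_e3_vfield p : divergence (e3_vfield p) = 0.
Proof. by rewrite /divergence big_ord3 /= !raddf0 embed_xy_mderivX2 !addr0. Qed.

End EmbedXY.

Section Decomposition.
Variables (R : numFieldType) (d : nat).
Implicit Types (v h G : vfield R) (p : {mpoly R[2]}).

Definition vfischer v G : R := \sum_(i < 3) fischer d.+2 (v i) (G i).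

Definition monomial_vfield (i : 'I_3) (m : 'X_{1..3}) : vfield R :=
  fun l => if (l == i) && (mdeg m == d.+1) then 'X_[m] else 0.

Definition xy_monomial (m : 'X_{1..3}) : {mpoly R[2]} :=
  if (mdeg m == d.+1) && (m i2 == 0%N) then 'X_ord0 ^+ m i0 * 'X_ord_max ^+ m i1 else 0.

(* A spanning family of rng(ad_N) + W_d in degree d.+1. *)
Definition span_vfield (j : 'I_3 * 'X_{1..3 < d.+2} + 'X_{1..3 < d.+2}) : vfield R :=
  match j with
  | inl (i, m) => adN (monomial_vfield i m)
  | inr m => e3_vfield (xy_monomial m)
  end.

Lemma monomial_vfield_dhomog i m : F3 d.+1 (monomial_vfield i m).
Proof.
move=> l; rewrite /monomial_vfield; case: ifP => [/andP[_ md]|_]; last exact: rpred0.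
by rewrite dhomogX.
Qed.

Lemma xy_monomial_dhomog m : xy_monomial m \is d.+1.-homog.
Proof.
rewrite /xy_monomial; case: ifP => [/andP[/eqP md /eqP m2]|_]; last exact: rpred0.
by rewrite -md mdeg3 m2 addn0 dhomogM ?dhomogXn.
Qed.

Lemma span_vfield_dhomog j : F3 d.+1 (span_vfield j).
Proof.
case: j => [[i m]|m]; first exact/adN_dhomog/monomial_vfield_dhomog.
exact/e3_vfield_dhomog/xy_monomial_dhomog.
Qed.

Lemma vfischer_adN h G : F3 d.+1 h -> F3 d.+1 G -> vfischer (adN h) G = vfischer h (adNT G).
Proof.
move=> hd Gd; have sz := @msize_dhomog R 3 d.+1.
rewrite /vfischer !big_ord3 adN_i0 adN_i1 adN_i2 /adNT !trNmat_vfield /=.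
by rewrite !fischerBl !fischer_derN ?sz // !raddfB raddf0 /=; ring.
Qed.

Lemma vfischer_monomial_vfield i m G : mdeg m = d.+1 ->
  vfischer (monomial_vfield i m) G = fischer d.+2 'X_[m] (G i).
Proof.
move=> md; rewrite /vfischer (bigD1 i) //= big1 ?addr0 => [|l li].
  by rewrite /monomial_vfield eqxx md eqxx.
by rewrite /monomial_vfield (negbTE li) fischer0l.
Qed.

Lemma vfischer_e3_vfield p G : vfischer (e3_vfield p) G = fischer d.+2 (embed_xy p) (G i2).
Proof. by rewrite /vfischer big_ord3 /e3_vfield /= !fischer0l !add0r. Qed.

Lemma embed_xy_monomial (m : 'X_{1..3}) :
  mdeg m = d.+1 -> m i2 = 0%N -> embed_xy (xy_monomial m) = 'X_[m].
Proof.
by move=> md m2; rewrite /xy_monomial md m2 !eqxx embed_xyX (mpolyX3 R m) m2 expr0 mulr1.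
Qed.

Lemma vfischer_mulX v g : F3 d.+1 v ->
  vfischer v (fun i => 'X_i * g) = fischer d.+2 (divergence v) g.
Proof.
move=> vd; rewrite /divergence fischer_suml; apply: eq_bigr => i _.
by rewrite fischer_mderiv // msize_dhomog.
Qed.

(* A field orthogonal to the spanning family is of the form xi g, hence is
   orthogonal to every divergence-free field. *)
Lemma vfischer_V3_eq0 G v : F3 d.+1 G -> (forall j, vfischer (span_vfield j) G = 0) ->
  F3 d.+1 v -> divergence v = 0 -> vfischer v G = 0.
Proof.
move=> Gd Gperp vd divv.
have bounded (m : 'X_{1..3}) : mdeg m = d.+1 -> (mdeg m < d.+2)%N by move->.
have GT0 i : adNT G i = 0.
  apply: (fischer_dhomog_eq0 (ltnSn d.+1)); first exact: adNT_dhomog.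
  move=> m md; rewrite fischerC -vfischer_monomial_vfield // -vfischer_adN //.
    exact: (Gperp (inl (i, BMultinom (bounded m md)))).
  exact: monomial_vfield_dhomog.
have [g G2] : exists g, G i2 = 'X_i2 * g.
  apply: factor_Xi => m m2; have [md|] := eqVneq (mdeg m) d.+1; last exact: dhomog_nemf_coeff.
  move/eqP: (Gperp (inr (BMultinom (bounded m md)))).
  rewrite vfischer_e3_vfield embed_xy_monomial // fischerC fischerXr md ltnSn.
  by rewrite mulf_eq0 pnatr_eq0 eqn0Ngt mfact_gt0 orbF => /eqP.
transitivity (vfischer v (fun i => 'X_i * g)).
  by apply: eq_bigr => i _; rewrite (adNT_kernel GT0 G2).
by rewrite vfischer_mulX // divv fischer0l.
Qed.

Lemma V3_decomposition v : F3 d.+1 v -> divergence v = 0 ->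
  exists h p, [/\ F3 d.+1 h, p \is d.+1.-homog & forall i, v i = adN h i + e3_vfield p i].
Proof.
move=> vd divv.
have [c vc] : exists c : _ -> R, forall x : 'I_3 * 'X_{1..3 < d.+2},
    (v x.1)@_x.2 = \sum_j c j * (span_vfield j x.1)@_x.2.
  apply: span_of_orthogonal => k Ak; rewrite (fischer_repP (d := d.+1)) //.
  apply: vfischer_V3_eq0 => // [i|j]; first exact: fischer_rep_dhomog.
  by rewrite -(Ak j) (fischer_repP (d := d.+1)) //; exact: span_vfield_dhomog.
pose h l := \sum_(x : 'I_3 * 'X_{1..3 < d.+2}) c (inl x) *: monomial_vfield x.1 x.2 l.
pose p := \sum_(m : 'X_{1..3 < d.+2}) c (inr m) *: xy_monomial m.
have hd : F3 d.+1 h.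
  by move=> l; rewrite rpred_sum // => x _; rewrite rpredZ // monomial_vfield_dhomog.
have pd : p \is d.+1.-homog.
  by rewrite rpred_sum // => m _; rewrite rpredZ // xy_monomial_dhomog.
exists h, p; split => // i; apply/mpolyP => m.
have [md|mn] := eqVneq (mdeg m) d.+1; last first.
  rewrite (dhomog_nemf_coeff (vd i) mn) (dhomog_nemf_coeff _ mn) //.
  by rewrite rpredD // ?adN_dhomog // e3_vfield_dhomog.
have mK : (mdeg m < d.+2)%N by rewrite md.
rewrite (vc (i, BMultinom mK)) big_sumType /= adN_sum e3_vfield_sum mcoeffD !raddf_sum /=.
by congr (_ + _); apply: eq_bigr; [case=> l m' _ | move=> m' _]; rewrite mcoeffZ.
Qed.

End Decomposition.

Section Divergence.
Variable R : comNzRingType.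
Implicit Types v w : vfield R.

Lemma eq_divergence v w : v =1 w -> divergence v = divergence w.
Proof. by move=> vw; apply: eq_bigr => i _; rewrite vw. Qed.

Lemma divergenceB v w : divergence (fun i => v i - w i) = divergence v - divergence w.
Proof. by rewrite -sumrB; apply: eq_bigr => i _; rewrite mderivB. Qed.

End Divergence.

Theorem lemma10 (R : realFieldType) (d : nat) (hd : (1 <= d)%N) :
  direct_sum_decomp (V3 (R := R) d)
    (fun v => rng_adN d v /\ V3 d v) (Wd (R := R) d).
Proof.
case: d hd => // d _; split.
- by move=> v [].
- move=> v [p pd vE]; split; first by move=> i; rewrite vE; exact: e3_vfield_dhomog.
  by rewrite (eq_divergence vE) divergence_e3_vfield.
- move=> v [vd divv]; have [h [p [hd pd vE]]] := V3_decomposition vd divv.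
  exists (adN h), (e3_vfield p); split=> //; last by exists p.
  split; first by exists h.
  split; first exact: adN_dhomog.
  rewrite (@eq_divergence _ _ (fun i => v i - e3_vfield p i)) => [|i]; last by rewrite vE addrK.
  by rewrite divergenceB divv divergence_e3_vfield subr0.
- move=> v [[h hd vh] _] [p pd vp] i.
  have q0 : embed_xy p = 0.
    have := vh i0; have := vh i1; have := vh i2.
    rewrite !vp adN_i0 adN_i1 adN_i2 /= => e2 e1 e0.
    apply: (derN2_zfree_eq0 (hd i1)); first exact: embed_xy_mderivX2.
    by rewrite e2 (subr0_eq (esym e1)).
  by rewrite vp q0 if_same.
Qed.
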